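(* Let $\mathcal{H}_X$, $\mathcal{H}_R$ be finite-dimensional Hilbert spaces, $U$ and $V_S$ unitaries on $\mathcal{H}_X$, and $S_{\mathrm{in}}=\{|\psi_1\rangle,\dots,|\psi_t\rangle\}$ a finite set of unit vectors in $\mathcal{H}_X\otimes\mathcal{H}_R$ such that $|\langle\psi_j|(U^\dagger V_S\otimes I)|\psi_j\rangle|=1$ for all $j$ (perfect training). If $S_{\mathrm{in}}$ is orthogonal partitioning resistant, then there exists $\theta\in(-\pi,\pi]$ such that $\langle\psi_j|(U^\dagger V_S\otimes I)|\psi_j\rangle=e^{i\theta}$ for all $|\psi_j\rangle\in S_{\mathrm{in}}$.
   Context: A set $S_{\mathrm{in}}$ of vectors is orthogonal partitioning resistant (OPR) iff for every partition $S_{\mathrm{in}}=A\cup B$ with $A\cap B=\emptyset$ one has $A\not\subseteq\mathrm{span}(B)^\perp$ (equivalently $B\not\subseteq\mathrm{span}(A)^\perp$). *)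

From HB Require Import structures.
From mathcomp Require Import all_boot all_order all_algebra.
From mathcomp Require Import complex mxtens.
From mathcomp Require Import reals trigo.
Set Implicit Arguments. Unset Strict Implicit. Unset Printing Implicit Defensive.
Import Order.TTheory GRing.Theory Num.Theory.
Local Open Scope ring_scope.

Definition adjmx (R : realType) (m n : nat) (M : 'M[R[i]]_(m, n)) : 'M[R[i]]_(n, m) :=
  (map_mx (fun z : R[i] => z^*) M)^T.

Definition is_unitary_mx (R : realType) (n : nat) (U : 'M[R[i]]_n) : Prop :=
  adjmx U *m U = 1%:M.

Definition innerprod (R : realType) (n : nat) (x y : 'cV[R[i]]_n) : R[i] :=
  (adjmx x *m y) 0 0.

Definition braket (R : realType) (n : nat) (psi : 'cV[R[i]]_n) (A : 'M[R[i]]_n) : R[i] :=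
  (adjmx psi *m A *m psi) 0 0.

Definition expi (R : realType) (theta : R) : R[i] := (cos theta +i* sin theta)%C.

(* matrix whose rows are the (transposed) vectors psi b, b in B; its row space
   is span{psi b | b in B} (transposed). *)
Definition spanmx (R : realType) (n t : nat) (psi : 'I_t -> 'cV[R[i]]_n)
  (B : {set 'I_t}) : 'M[R[i]]_(t, n) :=
  \matrix_(k < t) (if k \in B then (psi k)^T else 0).

Definition in_span (R : realType) (n t : nat) (psi : 'I_t -> 'cV[R[i]]_n)
  (B : {set 'I_t}) (v : 'cV[R[i]]_n) : Prop :=
  (v^T <= spanmx psi B)%MS.

Definition subset_span_perp (R : realType) (n t : nat) (psi : 'I_t -> 'cV[R[i]]_n)
  (A B : {set 'I_t}) : Prop :=
  forall a, a \in A -> forall v, in_span psi B v -> innerprod v (psi a) = 0.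

Definition OPR (R : realType) (n t : nat) (psi : 'I_t -> 'cV[R[i]]_n) : Prop :=
  forall A B : {set 'I_t}, A != set0 -> B != set0 -> [disjoint A & B] ->
    A :|: B = setT -> ~ subset_span_perp psi A B.

(** A unitary [W] with [|<psi|W|psi>| = 1] for a unit vector [psi] has [psi]
    as an eigenvector, by the equality case of Cauchy-Schwarz: with
    [l = <psi|W|psi>], [||W psi - l psi||^2 = 1 - |l|^2 = 0].  Eigenvectors
    of a unitary for distinct eigenvalues are orthogonal, so grouping the
    [psi j] by eigenvalue splits [S_in] into two mutually orthogonal parts
    unless all eigenvalues coincide; orthogonal partitioning resistance rules
    out such a split. *)

From HB Require Import structures.
From mathcomp Require Import all_boot all_order all_algebra.
From mathcomp Require Import complex mxtens.
From mathcomp Require Import reals trigo.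
From mathcomp Require Import lra.
Import Order.TTheory GRing.Theory Num.Theory.
Local Open Scope ring_scope.

Lemma tensmx11 (R : pzRingType) m n : (1%:M : 'M[R]_m) *t (1%:M : 'M[R]_n) = 1%:M.
Proof.
apply/matrixP=> i j.
case: (mxtens_indexP i) => i0 i1; case: (mxtens_indexP j) => j0 j1.
by rewrite tensmxE !mxE (can_eq (@mxtens_indexK m n)) xpair_eqE -natrM mulnb.
Qed.

Section Adjoint.
Context {R : realType}.
Local Notation C := R[i].

Lemma adjmxM m n p (A : 'M[C]_(m, n)) (B : 'M[C]_(n, p)) :
  adjmx (A *m B) = adjmx B *m adjmx A.
Proof. by rewrite /adjmx map_mxM trmx_mul. Qed.

Lemma adjmxK m n (A : 'M[C]_(m, n)) : adjmx (adjmx A) = A.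
Proof. by apply/matrixP=> i j; rewrite !mxE conjCK. Qed.

Lemma adjmx1 n : adjmx (1%:M : 'M[C]_n) = 1%:M.
Proof. by rewrite /adjmx map_mx1 trmx1. Qed.

Lemma adjmx_tens m n p q (A : 'M[C]_(m, n)) (B : 'M[C]_(p, q)) :
  adjmx (A *t B) = adjmx A *t adjmx B.
Proof. by rewrite /adjmx map_mxT trmx_tens. Qed.

End Adjoint.

Section Unitary.
Context {R : realType} {m n : nat}.
Local Notation C := R[i].

Lemma unitary1 : is_unitary_mx (1%:M : 'M[C]_n).
Proof. by rewrite /is_unitary_mx adjmx1 mulmx1. Qed.

Lemma unitary_adj {U : 'M[C]_n} : is_unitary_mx U -> is_unitary_mx (adjmx U).
Proof. by rewrite /is_unitary_mx adjmxK => /mulmx1C. Qed.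

Lemma unitary_mul {U V : 'M[C]_n} :
  is_unitary_mx U -> is_unitary_mx V -> is_unitary_mx (U *m V).
Proof.
rewrite /is_unitary_mx adjmxM => HU HV.
by rewrite mulmxA -(mulmxA (adjmx V)) HU mulmx1 HV.
Qed.

Lemma unitary_tens {U : 'M[C]_m} {V : 'M[C]_n} :
  is_unitary_mx U -> is_unitary_mx V -> is_unitary_mx (U *t V).
Proof.
by rewrite /is_unitary_mx adjmx_tens tensmx_mul => -> ->; rewrite tensmx11.
Qed.

End Unitary.

Section InnerProduct.
Context {R : realType} {n : nat}.
Local Notation C := R[i].
Implicit Types (x y z : 'cV[C]_n) (k : C).

Lemma innerprodE x y : innerprod x y = \sum_j (x j 0)^* * y j 0.
Proof. by rewrite /innerprod mxE; apply: eq_bigr => j _; rewrite !mxE. Qed.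

Lemma innerprodC x y : innerprod y x = (innerprod x y)^*.
Proof.
rewrite !innerprodE rmorph_sum; apply: eq_bigr => j _.
by rewrite rmorphM /= conjCK mulrC.
Qed.

Lemma innerprodBl x y z : innerprod (x - y) z = innerprod x z - innerprod y z.
Proof.
by rewrite !innerprodE -sumrB; apply: eq_bigr => j _; rewrite !mxE rmorphB mulrBl.
Qed.

Lemma innerprodBr x y z : innerprod z (x - y) = innerprod z x - innerprod z y.
Proof.
by rewrite !innerprodE -sumrB; apply: eq_bigr => j _; rewrite !mxE mulrBr.
Qed.

Lemma innerprodZl k x y : innerprod (k *: x) y = k^* * innerprod x y.
Proof.
by rewrite !innerprodE mulr_sumr; apply: eq_bigr => j _; rewrite !mxE rmorphM mulrA.
Qed.

Lemma innerprodZr k x y : innerprod y (k *: x) = k * innerprod y x.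
Proof.
by rewrite !innerprodE mulr_sumr; apply: eq_bigr => j _; rewrite !mxE mulrCA.
Qed.

Lemma innerprod_self_eq0 x : innerprod x x = 0 -> x = 0.
Proof.
rewrite innerprodE => /eqP; rewrite psumr_eq0 => [/allP x0|j _]; last first.
  by rewrite mulrC mul_conjC_ge0.
apply/matrixP => j k; rewrite (ord1 k) mxE.
by have := x0 j (mem_index_enum j); rewrite mulrC mul_conjC_eq0 => /eqP.
Qed.

Lemma innerprod_unitary (W : 'M[C]_n) x y :
  is_unitary_mx W -> innerprod (W *m x) (W *m y) = innerprod x y.
Proof.
move=> HW; rewrite /innerprod adjmxM mulmxA -(mulmxA (adjmx x)) HW.
by rewrite mulmx1.
Qed.

End InnerProduct.

Section UnitaryEigenvectors.
Context {R : realType} {n : nat} {W : 'M[R[i]]_n}.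
Hypothesis W_unitary : is_unitary_mx W.

Lemma braket_norm1_eigenvector x :
  innerprod x x = 1 -> `|braket x W| = 1 -> W *m x = braket x W *: x.
Proof.
move=> x1 l1.
have xWx : innerprod x (W *m x) = braket x W by rewrite /innerprod mulmxA.
set l := braket x W in xWx l1 *.
have ll : l * l^* = 1 by rewrite -normCK l1 expr1n.
apply/eqP; rewrite -subr_eq0; apply/eqP/innerprod_self_eq0.
rewrite innerprodBl !innerprodBr !innerprodZl !innerprodZr innerprod_unitary //.
by rewrite (innerprodC x (W *m x)) x1 xWx mulr1 subrr subr0 ll subrr.
Qed.

Lemma unitary_eigenvectors_orthogonal {x y lx ly} :
  W *m x = lx *: x -> W *m y = ly *: y -> `|ly| = 1 -> lx != ly ->
  innerprod y x = 0.
Proof.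
move=> Wx Wy ly1; apply: contraNeq => yx_neq0.
have := innerprod_unitary W y x W_unitary.
rewrite Wx Wy innerprodZl innerprodZr mulrA -[RHS]mul1r => /(mulIf yx_neq0) lylx.
have lyly : ly * ly^* = 1 by rewrite -normCK ly1 expr1n.
by rewrite -[lx]mul1r -lyly -mulrA lylx mulr1.
Qed.

End UnitaryEigenvectors.

Section Partitions.
Context {R : realType} {n t : nat} {psi : 'I_t -> 'cV[R[i]]_n}.

Lemma spanmx_mul_adj (B : {set 'I_t}) (x : 'cV[R[i]]_n) k :
  (spanmx psi B *m (adjmx x)^T) k 0 = if k \in B then innerprod x (psi k) else 0.
Proof.
rewrite mxE; under eq_bigr => j _ do rewrite !mxE.
case: ifP => _; last by apply: big1 => j _; rewrite mxE mul0r.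
by rewrite innerprodE; apply: eq_bigr => j _; rewrite !mxE mulrC.
Qed.

Lemma orthogonal_subset_span_perp (A B : {set 'I_t}) :
  (forall a b, a \in A -> b \in B -> innerprod (psi a) (psi b) = 0) ->
  subset_span_perp psi A B.
Proof.
move=> AB a aA v /submxP[w vE].
apply/eqP; rewrite innerprodC conjC_eq0; apply/eqP.
have -> : innerprod (psi a) v = (adjmx (psi a) *m v)^T 0 0 by rewrite mxE.
rewrite trmx_mul vE -mulmxA mxE big1 // => k _.
by rewrite spanmx_mul_adj; case: ifP => [/(AB a k aA)->|_]; rewrite mulr0.
Qed.

Lemma OPR_constant {T : eqType} (l : 'I_t -> T) :
  OPR psi -> (forall a b, l a != l b -> innerprod (psi a) (psi b) = 0) ->
  forall a b, l a = l b.
Proof.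
move=> opr orth a b; apply/eqP/negPn/negP => lab.
apply: (opr [set k | l k == l a] [set k | l k != l a]).
- by apply/set0Pn; exists a; rewrite inE.
- by apply/set0Pn; exists b; rewrite inE eq_sym.
- by rewrite disjoints_subset; apply/subsetP => k; rewrite !inE negbK.
- by apply/setP => k; rewrite !inE orbN.
apply: orthogonal_subset_span_perp => k k' /[!inE] /eqP lk lk'.
by apply: orth; rewrite lk eq_sym.
Qed.

End Partitions.

Lemma unit_circle_expi {R : realType} {z : R[i]} :
  `|z| = 1 -> exists theta : R, -pi < theta <= pi /\ expi theta = z.
Proof.
rewrite normc_def; case: z => a b /= /(congr1 (@complex.Re R)) /= ab1.
have {}ab1 : a ^+ 2 + b ^+ 2 = 1.
  by rewrite -[LHS]sqr_sqrtr ?ab1 ?expr1n // addr_ge0 // sqr_ge0.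
have a_bounds : -1 <= a <= 1 by apply/andP; split; nra.
have a_itv : a \in `[-1, 1] by rewrite in_itv.
have sqrt_b : Num.sqrt (1 - a ^+ 2) = `|b|.
  by rewrite -ab1 addrAC subrr add0r sqrtr_sqr.
have pi0 := pi_gt0 R.
have acos0 := acos_ge0 a_bounds.
case: (leP 0 b) => b0.
  exists (acos a); split.
    by rewrite acos_lepi // andbT (lt_le_trans _ acos0) // oppr_lt0.
  by rewrite /expi acosK // sin_acos // sqrt_b ger0_norm.
exists (- acos a); split.
  rewrite lerNl (le_trans _ acos0) ?oppr_le0 ?ltW // andbT ltrN2.
  by apply: acos_ltpi; case/andP: a_bounds => _ ->; rewrite andbT; nra.
by rewrite /expi cosN sinN acosK // sin_acos // sqrt_b ltr0_norm // opprK.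
Qed.

Theorem lemma4 (R : realType) (dX dR t : nat) (U VS : 'M[R[i]]_dX)
  (psi : 'I_t -> 'cV[R[i]]_(dX * dR)) :
  is_unitary_mx U -> is_unitary_mx VS ->
  injective psi ->
  (forall j, innerprod (psi j) (psi j) = 1) ->
  (forall j, `|braket (psi j) ((adjmx U *m VS) *t (1%:M : 'M[R[i]]_dR))| = 1) ->
  OPR psi ->
  exists theta : R, -pi < theta <= pi /\
    forall j, braket (psi j) ((adjmx U *m VS) *t (1%:M : 'M[R[i]]_dR)) = expi theta.
Proof.
move=> HU HV _ psi1 braket1 opr.
set W := (adjmx U *m VS) *t _ in braket1 *.
have W_unitary : is_unitary_mx W.
  exact: unitary_tens (unitary_mul (unitary_adj HU) HV) unitary1.
pose l j := braket (psi j) W.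
have eigen j : W *m psi j = l j *: psi j.
  exact: braket_norm1_eigenvector.
have l_const : forall a b, l a = l b.
  apply: (OPR_constant l opr) => a b lab.
  apply: (unitary_eigenvectors_orthogonal W_unitary (eigen b) (eigen a) (braket1 a)).
  by rewrite eq_sym.
have [j0 _ | t0] := pickP (@predT 'I_t); last first.
  exists 0; split => [|j]; last by have := t0 j.
  by rewrite oppr_lt0 pi_gt0 ltW ?pi_gt0.
have [theta [theta_itv expi_theta]] := unit_circle_expi (braket1 j0).
by exists theta; split => // j; rewrite expi_theta; exact: (l_const j j0).
Qed.
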